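(* Let $M,N_1,\dots,N_n$ be $\lambda$-terms and $I$ an interpretation. If the judgment $x_1:\vec a_1,\dots,x_n:\vec a_n\vdash M:a$ is derivable in $E^S_A$ and $N_i\in\llbracket\vec a_i\rrbracket_I$ for all $i$, then $M[N_1/x_1,\dots,N_n/x_n]\in\llbracket a\rrbracket_I$ (parallel capture-avoiding substitution).
   Context: $[n]=\{1,\dots,n\}$. Fix a class $\mathcal C$ of functions between finite ordinals equal to one of: all bijections, all injections, all surjections, all functions. For a small category $X$, $SX$ has finite lists of objects of $X$ as objects and morphisms $\langle x_1,\dots,x_n\rangle\to\langle y_1,\dots,y_m\rangle$ the tuples $\langle\alpha,f_1,\dots,f_m\rangle$ with $\alpha:[m]\to[n]$ in $\mathcal C$, $f_i:x_{\alpha(i)}\to y_i$; composite of $\langle\alpha,\vec f\rangle$ then $\langle\beta,\vec g\rangle$ is $\langle\alpha\circ\beta,(g_i\circ f_{\beta(i)})_i\rangle$; tensor $\oplus$ = concatenation, unit $\langle\rangle$. Fix a small category $A$. $D=D_A$ is the colimit of $D_0=A$, $D_{k+1}=(SD_k)^{o}\times D_k\sqcup A$: objects $a::=o\mid\langle a_1,\dots,a_k\rangle\Rightarrow a$ ($o\in\mathrm{Ob}(A)$); morphisms are those of $A$ and $\langle\alpha,\vec f\rangle\Rightarrow f:(\vec a\Rightarrow a)\to(\vec a'\Rightarrow a')$ for $\langle\alpha,\vec f\rangle:\vec a'\to\vec a$ in $SD$, $f:a\to a'$. $SD=S(D_A)$. Contexts are $\Delta=\langle\vec a_1,\dots,\vec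 a_n\rangle\in(SD)^n$, written $x_1:\vec a_1,\dots,x_n:\vec a_n$; $\otimes$ is componentwise concatenation. Type system $E^S_A$: (Var) given morphisms $f_j:\vec a_j\to\langle\rangle$ ($j\ne i$) and $f_i:\vec a_i\to\langle a\rangle$ in $SD$, infer $x_1:\vec a_1,\dots,x_n:\vec a_n\vdash x_i:a$; (Abs) from $\Delta,x:\vec a\vdash M:a$ infer $\Delta\vdash\lambda x.M:\vec a\Rightarrow a$; (App) from $\Gamma_0\vdash M:\langle a_1,\dots,a_k\rangle\Rightarrow a$, $\Gamma_i\vdash N:a_i$ ($1\le i\le k$) and a morphism $\eta:\Delta\to\bigotimes_{i=0}^k\Gamma_i$ in $(SD)^n$, infer $\Delta\vdash MN:a$. $\Lambda$ is the set of $\lambda$-terms; $\mathcal X\subseteq\Lambda$ is saturated if $M[N/x]N_1\cdots N_n\in\mathcal X$ implies $(\lambda x.M)NN_1\cdots N_n\in\mathcal X$; $\mathcal X_1\Rightarrow\mathcal X_2=\{M\mid\forall N\in\mathcal X_1,MN\in\mathcal X_2\}$. An interpretation is a functor $I$ from $A$ to the poset of saturated subsets of $\Lambda$ under inclusion. Realizers: $\llbracket o\rrbracket_I=I(o)$, $\llbracket\langle\rangle\rrbracket_I=\Lambda$, $\llbracket\langle a_1,\dots,a_k\rangle\rrbracket_I=\bigcap_{i}\llbracket a_i\rrbracket_I$ ($k\ge1$), $\llbracket\vec a\Rightarrow a\rrbracket_I=\llbracket\vec a\rrbracket_I\Rightarrow\llbracket a\rrbracket_I$. *)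

From mathcomp Require Import all_boot.
Set Implicit Arguments.
Unset Strict Implicit.
Unset Printing Implicit Defensive.

Record Category := {
  Obj : Type;
  Hom : Obj -> Obj -> Type;
  cid : forall x, Hom x x;
  ccomp : forall x y z, Hom x y -> Hom y z -> Hom x z;  (* diagrammatic order *)
  ccomp_id_l : forall x y (f : Hom x y), ccomp (cid x) f = f;
  ccomp_id_r : forall x y (f : Hom x y), ccomp f (cid y) = f;
  ccomp_assoc : forall x y z w (f : Hom x y) (g : Hom y z) (h : Hom z w),
      ccomp (ccomp f g) h = ccomp f (ccomp g h)
}.

Inductive fclass := Bijections | Injections | Surjections | AllFunctions.

(* alpha : [m] -> [n], with [m] represented by 'I_m = {0,...,m-1} *)
Definition inC (C : fclass) (m n : nat) (alpha : 'I_m -> 'I_n) : Prop :=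
  match C with
  | Bijections => bijective alpha
  | Injections => injective alpha
  | Surjections => forall y : 'I_n, exists x : 'I_m, alpha x = y
  | AllFunctions => True
  end.

Inductive dty (A : Category) : Type :=
| dbase : Obj A -> dty A
| darr : seq (dty A) -> dty A -> dty A.
Arguments dbase {A}.
Arguments darr {A}.

Definition lth (T : Type) (s : seq T) (i : 'I_(size s)) : T := tnth (in_tuple s) i.

Inductive dhom (A : Category) (C : fclass) : dty A -> dty A -> Type :=
| dhom_base : forall (o o' : Obj A), Hom o o' -> dhom C (dbase o) (dbase o')
| dhom_arr : forall (s s' : seq (dty A)) (a a' : dty A)
      (alpha : 'I_(size s) -> 'I_(size s')),
      inC C alpha ->
      (forall i : 'I_(size s), dhom C (lth (alpha i)) (lth i)) ->
      dhom C a a' ->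
      dhom C (darr s a) (darr s' a').

Definition shom (A : Category) (C : fclass) (src tgt : seq (dty A)) : Type :=
  { alpha : 'I_(size tgt) -> 'I_(size src) &
    (inC C alpha * forall i : 'I_(size tgt), dhom C (lth (alpha i)) (lth i))%type }.

(* contexts: elements of (S D)^n, as lists of lists *)
Definition ctx (A : Category) := seq (seq (dty A)).

Fixpoint ctxhom (A : Category) (C : fclass) (D G : ctx A) : Type :=
  match D, G with
  | [::], [::] => unit
  | d :: D', g :: G' => (shom C d g * ctxhom C D' G')%type
  | _, _ => Empty_set
  end.

Definition ctensor (A : Category) (G1 G2 : ctx A) : ctx A :=
  [seq x.1 ++ x.2 | x <- zip G1 G2].

Inductive term : Type :=
| tvar : nat -> term
| tlam : term -> term
| tapp : term -> term -> term.

Fixpoint ren (xi : nat -> nat) (t : term) : term :=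
  match t with
  | tvar n => tvar (xi n)
  | tlam t => tlam (ren (fun n => match n with 0 => 0 | n.+1 => (xi n).+1 end) t)
  | tapp t u => tapp (ren xi t) (ren xi u)
  end.

Definition up (sigma : nat -> term) : nat -> term :=
  fun n => match n with 0 => tvar 0 | n.+1 => ren S (sigma n) end.

Fixpoint subst (sigma : nat -> term) (t : term) : term :=
  match t with
  | tvar n => sigma n
  | tlam t => tlam (subst (up sigma) t)
  | tapp t u => tapp (subst sigma t) (subst sigma u)
  end.

Definition scons (N : term) (sigma : nat -> term) : nat -> term :=
  fun n => match n with 0 => N | n.+1 => sigma n end.

Definition apps (M : term) (Ns : seq term) : term := foldl tapp M Ns.

(* the substitution [N_1/x_1, ..., N_n/x_n] (variable x_i = index i-1) *)
Definition par_subst (Ns : seq term) : nat -> term := fun i => nth (tvar i) Ns i.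

Definition tset := term -> Prop.

Definition saturated (X : tset) : Prop :=
  forall (M N : term) (Ns : seq term),
    X (apps (subst (scons N tvar) M) Ns) -> X (apps (tapp (tlam M) N) Ns).

Definition tarrow (X1 X2 : tset) : tset := fun M => forall N, X1 N -> X2 (tapp M N).

(* interpretation: a functor from A to the poset of saturated sets *)
Record interp (A : Category) := {
  iobj : Obj A -> tset;
  iobj_sat : forall o, saturated (iobj o);
  ihom : forall o o' : Obj A, Hom o o' -> forall M, iobj o M -> iobj o' M
}.

Fixpoint real (A : Category) (I : interp A) (a : dty A) {struct a} : tset :=
  match a with
  | dbase o => iobj I o
  | darr s b =>
      tarrow ((fix go (l : seq (dty A)) : tset :=
                 match l with
                 | [::] => fun _ => True
                 | x :: l' => fun M => real I x M /\ go l' M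
                 end) s)
             (real I b)
  end.

Fixpoint reals (A : Category) (I : interp A) (l : seq (dty A)) : tset :=
  match l with
  | [::] => fun _ => True
  | x :: l' => fun M => real I x M /\ reals I l' M
  end.

(* A context x_1 : s_1, ..., x_n : s_n is the list [:: s_1; ...; s_n];
   x_i is the de Bruijn index i-1; extending a context by x : s puts s in
   front (so the new variable is index 0). *)
Inductive deriv (A : Category) (C : fclass) : ctx A -> term -> dty A -> Prop :=
| d_var : forall (D : ctx A) (i : nat) (a : dty A),
    i < size D ->
    shom C (nth [::] D i) [:: a] ->
    (forall j, j < size D -> j <> i -> shom C (nth [::] D j) [::]) ->
    deriv C D (tvar i) a
| d_abs : forall (D : ctx A) (s : seq (dty A)) (M : term) (a : dty A),
    deriv C (s :: D) M a ->
    deriv C D (tlam M) (darr s a)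
| d_app : forall (D G0 : ctx A) (Gs : seq (ctx A)) (M N : term)
      (s : seq (dty A)) (a : dty A),
    deriv C G0 M (darr s a) ->
    size Gs = size s ->
    (forall i : 'I_(size s), deriv C (nth [::] Gs i) N (lth i)) ->
    size G0 = size D ->
    all (fun G => size G == size D) Gs ->
    ctxhom C D (foldl (@ctensor A) G0 Gs) ->
    deriv C D (tapp M N) a.

From mathcomp Require Import all_boot.

(* By induction on derivations, strengthened from the substitution
   [N_1/x_1, ..., N_n/x_n] to any substitution sigma with sigma i in the
   realizer of the i-th context entry.  Realizers only grow along morphisms of
   D and of S D (an arrow morphism is contravariant in its source list, exactly
   as the intersection [[<a_1,...,a_k>]] is), which settles (Var) and the
   context morphism of (App); the tensor of contexts is interpreted by
   intersection, so each premise of (App) inherits a realizing substitution.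
   For (Abs), every realizer is saturated, so (lam x. M) N is realized as soon
   as the beta-reduct M[N/x, sigma] is. *)

Lemma ren_ext xi zeta t : xi =1 zeta -> ren xi t = ren zeta t.
Proof.
elim: t xi zeta => [n|t IH|t IHt u IHu] xi zeta E /=; first by rewrite E.
- by congr tlam; apply: IH => -[|n] //=; rewrite E.
- by rewrite (IHt _ zeta) // (IHu _ zeta).
Qed.

Lemma subst_ext s1 s2 t : s1 =1 s2 -> subst s1 t = subst s2 t.
Proof.
elim: t s1 s2 => [n|t IH|t IHt u IHu] s1 s2 E /=; first by rewrite E.
- by congr tlam; apply: IH => -[|n] //=; rewrite /up E.
- by rewrite (IHt _ s2) // (IHu _ s2).
Qed.

Lemma ren_ren xi zeta t : ren xi (ren zeta t) = ren (xi \o zeta) t.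
Proof.
elim: t xi zeta => [n|t IH|t IHt u IHu] xi zeta //=.
- by congr tlam; rewrite IH; apply: ren_ext => -[|n].
- by rewrite IHt IHu.
Qed.

Lemma subst_ren s xi t : subst s (ren xi t) = subst (s \o xi) t.
Proof.
elim: t s xi => [n|t IH|t IHt u IHu] s xi //=.
- by congr tlam; rewrite IH; apply: subst_ext => -[|n].
- by rewrite IHt IHu.
Qed.

Lemma ren_subst xi s t : ren xi (subst s t) = subst (ren xi \o s) t.
Proof.
elim: t s xi => [n|t IH|t IHt u IHu] s xi //=.
- congr tlam; rewrite IH; apply: subst_ext => -[|n] //=.
  by rewrite /up !ren_ren.
- by rewrite IHt IHu.
Qed.

Lemma subst_subst s1 s2 t : subst s2 (subst s1 t) = subst (subst s2 \o s1) t.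
Proof.
elim: t s1 s2 => [n|t IH|t IHt u IHu] s1 s2 //=.
- congr tlam; rewrite IH; apply: subst_ext => -[|n] //=.
  by rewrite /up ren_subst subst_ren.
- by rewrite IHt IHu.
Qed.

Lemma subst_tvar t : subst tvar t = t.
Proof.
elim: t => [n|t IH|t IHt u IHu] //=.
- by congr tlam; rewrite -[RHS]IH; apply: subst_ext => -[|n].
- by rewrite IHt IHu.
Qed.

Lemma subst_beta_up N s M :
  subst (scons N tvar) (subst (up s) M) = subst (scons N s) M.
Proof.
rewrite subst_subst; apply: subst_ext => -[|n] //=.
by rewrite subst_ren subst_tvar.
Qed.

Lemma tarrow_sat X1 X2 : saturated X2 -> saturated (tarrow X1 X2).
Proof.
move=> sat2 M N Ns XMN N' X1N'.
have := sat2 M N (rcons Ns N'); rewrite /apps !foldl_rcons.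
by apply; apply: XMN.
Qed.

Section Realizability.
Variables (A : Category) (C : fclass) (I : interp A).

Lemma real_darr s b : real I (darr s b) = tarrow (reals I s) (real I b).
Proof. by rewrite /=; congr tarrow; elim: s => //= x s ->. Qed.

Lemma real_sat a : saturated (real I a).
Proof.
elim: a => [o|s b sat_b]; first exact: iobj_sat.
by rewrite real_darr; apply: tarrow_sat.
Qed.

Lemma lth_lift (x : dty A) l (i : 'I_(size l)) :
  @lth _ (x :: l) (lift ord0 i) = lth i.
Proof. by rewrite /lth !(tnth_nth x). Qed.

Lemma lth0 (x : dty A) l : @lth _ (x :: l) ord0 = x.
Proof. by rewrite /lth (tnth_nth x). Qed.

Lemma realsP l t : reals I l t <-> forall i : 'I_(size l), real I (lth i) t.
Proof.
elim: l => [|x l IH] /=; first by split=> // _ [].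
split=> [[rx /IH rl] i|rxl].
- by case: (unliftP ord0 i) => [j ->|->]; rewrite ?lth_lift ?lth0.
- split; first by have := rxl ord0; rewrite lth0.
  by apply/IH => i; rewrite -(lth_lift x); apply: rxl.
Qed.

Lemma reals_cat l1 l2 t : reals I (l1 ++ l2) t <-> reals I l1 t /\ reals I l2 t.
Proof. by elim: l1 => [|x l IH] /=; tauto. Qed.

Lemma reals_flatten ls t :
  reals I (flatten ls) t <-> forall k, k < size ls -> reals I (nth [::] ls k) t.
Proof.
elim: ls => [|l ls IH] /=; first by [].
split=> [/reals_cat[rl /IH rls] [|k]|rlls] //=; first exact: rls.
apply/reals_cat; split; first exact: (rlls 0).
by apply/IH => k; apply: (rlls k.+1).
Qed.

Lemma real_dhom a b : dhom C a b -> forall t, real I a t -> real I b t.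
Proof.
elim=> [o o' f|s s' a0 a' alpha _ fs real_fs g real_g] t; first exact: ihom.
rewrite !real_darr => ra N /realsP rN; apply: real_g; apply: ra.
by apply/realsP => i; apply: real_fs; apply: rN.
Qed.

Lemma reals_shom s s' : shom C s s' -> forall t, reals I s t -> reals I s' t.
Proof.
move=> [alpha [_ fs]] t /realsP rs; apply/realsP => i.
exact: real_dhom _ _ (fs i) _ (rs (alpha i)).
Qed.

Lemma reals_ctxhom D G : ctxhom C D G ->
  forall i t, reals I (nth [::] D i) t -> reals I (nth [::] G i) t.
Proof.
elim: D G => [|d D IH] [|g G] //= [h hs] [|i] t; first exact: reals_shom.
exact: IH.
Qed.

Lemma nth_ctensor (G1 G2 : ctx A) i : size G1 = size G2 ->
  nth [::] (ctensor G1 G2) i = nth [::] G1 i ++ nth [::] G2 i.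
Proof.
move=> E; have [lt_iG|le_Gi] := ltnP i (size G1).
  by rewrite (nth_map ([::], [::])) ?nth_zip // size_zip E minnn -E.
by rewrite !nth_default // ?size_map ?size_zip -?E ?minnn.
Qed.

Lemma size_ctensor (G1 G2 : ctx A) :
  size G1 = size G2 -> size (ctensor G1 G2) = size G1.
Proof. by move=> E; rewrite size_map size_zip E minnn. Qed.

Lemma nth_foldl_ctensor (G0 : ctx A) Gs i :
  all (fun G => size G == size G0) Gs ->
  nth [::] (foldl (@ctensor A) G0 Gs) i
  = nth [::] G0 i ++ flatten [seq nth [::] G i | G <- Gs].
Proof.
elim: Gs G0 => [|G Gs IH] G0 /=; first by rewrite cats0.
case/andP=> /eqP EG sizeGs.
rewrite IH ?nth_ctensor ?catA //.
by rewrite size_ctensor // EG.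
Qed.

(* Past the end of D, [nth] returns [::], realized by every term; hence no
   bound on i. *)
Definition realizes (D : ctx A) (sigma : nat -> term) : Prop :=
  forall i, reals I (nth [::] D i) (sigma i).

Lemma deriv_sound D M a : deriv C D M a ->
  forall sigma, realizes D sigma -> real I a (subst sigma M).
Proof.
elim=> {D M a} [D i a _ h _|D s M a _ IH|D G0 Gs M N s a _ IHM sizeGs _ IHN
               sizeG0 sizeG h] sigma rD.
- by have [] := reals_shom _ _ h _ (rD i).
- rewrite real_darr => N rN; apply: (real_sat a _ _ [::]).
  by rewrite /apps /= subst_beta_up; apply: IH => -[|i] //; apply: rD.
- have sizeG' : all (fun G => size G == size G0) Gs by rewrite sizeG0.
  have rG i : reals I (nth [::] G0 i) (sigma i) /\
              reals I (flatten [seq nth [::] G i | G <- Gs]) (sigma i).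
    apply/reals_cat; rewrite -nth_foldl_ctensor //.
    exact: reals_ctxhom _ _ h _ _ (rD i).
  have := IHM sigma (fun i => (rG i).1); rewrite real_darr; apply.
  apply/realsP => k; apply: IHN => i.
  have /reals_flatten := (rG i).2.
  rewrite size_map sizeGs => /(_ k (ltn_ord k)).
  by rewrite (nth_map [::]) ?sizeGs.
Qed.

End Realizability.

Theorem lemma5 (A : Category) (C : fclass) (I : interp A)
    (D : ctx A) (M : term) (a : dty A) (Ns : seq term) :
  size Ns = size D ->
  deriv C D M a ->
  (forall i, i < size D -> reals I (nth [::] D i) (nth (tvar i) Ns i)) ->
  real I a (subst (par_subst Ns) M).
Proof.
move=> _ dM rNs; apply: deriv_sound dM _ _ => i.
by have [/rNs|le_Di] := ltnP i (size D); last rewrite nth_default.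
Qed.
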